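(* There exists no fixed point combinator $Y$ such that $Y(\lambda z.\, f z z) =_\beta Y(\lambda x.\, Y(\lambda y.\, f x y))$, where $f$ is a variable.
   Context: Untyped $\lambda$-calculus modulo $\alpha$. A fixed point combinator is a $\lambda$-term $Y$ (not necessarily closed) with $Yx =_\beta x(Yx)$ for a variable $x$ not free in $Y$. *)

From Stdlib Require Import Arith Relations.

Inductive term : Type :=
| Var : nat -> term
| App : term -> term -> term
| Lam : term -> term.

Fixpoint lift (d c : nat) (t : term) : term :=
  match t with
  | Var n => if Nat.ltb n c then Var n else Var (n + d)
  | App t1 t2 => App (lift d c t1) (lift d c t2)
  | Lam t1 => Lam (lift d (S c) t1)
  end.

Fixpoint subst (k : nat) (u : term) (t : term) : term :=
  match t with
  | Var n =>
      if Nat.ltb n k then Var n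
      else if Nat.eqb n k then lift k 0 u
      else Var (pred n)
  | App t1 t2 => App (subst k u t1) (subst k u t2)
  | Lam t1 => Lam (subst (S k) u t1)
  end.

Inductive beta : term -> term -> Prop :=
| beta_redex : forall t u, beta (App (Lam t) u) (subst 0 u t)
| beta_appl : forall t t' u, beta t t' -> beta (App t u) (App t' u)
| beta_appr : forall t u u', beta u u' -> beta (App t u) (App t u')
| beta_lam : forall t t', beta t t' -> beta (Lam t) (Lam t').

Definition beta_eq : term -> term -> Prop := clos_refl_sym_trans term beta.

Fixpoint free (n : nat) (t : term) : Prop :=
  match t with
  | Var m => m = n
  | App t1 t2 => free n t1 \/ free n t2
  | Lam t1 => free (S n) t1
  end.

Definition fpc (Y : term) : Prop :=
  exists x : nat, ~ free x Y /\
    beta_eq (App Y (Var x)) (App (Var x) (App Y (Var x))).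

(* lambda z. f z z *)
Definition diag_fun (f : nat) : term :=
  Lam (App (App (Var (S f)) (Var 0)) (Var 0)).

(* lambda x. Y (lambda y. f x y) *)
Definition nested_fix (Y : term) (f : nat) : term :=
  Lam (App (lift 1 0 Y) (Lam (App (App (Var (S (S f))) (Var 1)) (Var 0)))).

From Stdlib Require Import Arith Lia Relations.

(* Write A := Y (λz. f z z). Unfolding Y once in the hypothesis turns it into
   A =β C := Y (λz. f A z).  Consider the terms in which every occurrence of f
   is applied to two β-convertible arguments: A is one, and the class is closed
   under reduction.  On the other hand C, and everything it reduces to, is
   obtained from a reduct of Y x (x fresh) by replacing x with λz. f A z, so
   each f in it carries the argument A.  In a common reduct P of A and C the
   second argument of each f is then convertible to A and, inductively, free of
   f.  But no f-free term is convertible to A: substituting λa b. c for f sends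
   A to c for every variable c.  Hence P is f-free, which is absurd. *)

Ltac destruct_nat_tests := repeat match goal with
  | |- context [Nat.ltb ?a ?b] => destruct (Nat.ltb_spec a b)
  | |- context [Nat.eqb ?a ?b] => destruct (Nat.eqb_spec a b)
  end.

(** * Substitution *)

Fixpoint psubst (s : nat -> term) (k : nat) (t : term) : term :=
  match t with
  | Var n => if Nat.ltb n k then Var n else lift k 0 (s (n - k))
  | App a b => App (psubst s k a) (psubst s k b)
  | Lam a => Lam (psubst s (S k) a)
  end.

Definition subst_env (u : term) (n : nat) : term :=
  match n with 0 => u | S n' => Var n' end.

Lemma lift_0 t c : lift 0 c t = t.
Proof. revert c; induction t; intros c; simpl; destruct_nat_tests; f_equal; auto; lia. Qed.

Lemma lift_lift t i j c c' : c <= c' -> c' <= c + j ->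
  lift i c' (lift j c t) = lift (i + j) c t.
Proof.
  revert i j c c'; induction t; intros i j c c' H1 H2; simpl.
  - destruct_nat_tests; simpl; destruct_nat_tests; f_equal; lia.
  - f_equal; auto.
  - f_equal; apply IHt; lia.
Qed.

Lemma subst_lift t u k m c : c <= k -> k <= c + m ->
  subst k u (lift (S m) c t) = lift m c t.
Proof.
  revert u k m c; induction t; intros u k m c H1 H2; simpl.
  - destruct_nat_tests; simpl; destruct_nat_tests; f_equal; lia.
  - f_equal; auto.
  - f_equal; apply IHt; lia.
Qed.

Lemma psubst_lift u s j c k : c <= k ->
  psubst s (j + k) (lift j c u) = lift j c (psubst s k u).
Proof.
  revert s j c k; induction u; intros s j c k H; simpl.
  - destruct_nat_tests; simpl; destruct_nat_tests; try (f_equal; lia).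
    all: rewrite lift_lift by lia; replace (n + j - (j + k)) with (n - k) by lia;
      f_equal; lia.
  - f_equal; auto.
  - f_equal. replace (S (j + k)) with (j + S k) by lia. apply IHu; lia.
Qed.

Lemma psubst_subst b s u j k :
  psubst s (j + k) (subst j u b) = subst j (psubst s k u) (psubst s (S (j + k)) b).
Proof.
  revert s u j k; induction b; intros s u j k; simpl.
  - destruct_nat_tests; simpl; destruct_nat_tests; try (f_equal; lia).
    + subst. rewrite <- (psubst_lift u s j 0 k) by lia. reflexivity.
    + rewrite subst_lift by lia. f_equal; f_equal; lia.
  - f_equal; auto.
  - f_equal. replace (S (j + k)) with (S j + k) by lia. apply IHb.
Qed.

Lemma psubst_subst0 b s u k :
  psubst s k (subst 0 u b) = subst 0 (psubst s k u) (psubst s (S k) b).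
Proof. exact (psubst_subst b s u 0 k). Qed.

Lemma lift_psubst t m c : lift m c t = psubst (fun n => Var (n + m)) c t.
Proof.
  revert c; induction t; intros c; simpl.
  - destruct_nat_tests; simpl; destruct_nat_tests; f_equal; lia.
  - f_equal; auto.
  - f_equal; auto.
Qed.

Lemma subst_psubst t u k : subst k u t = psubst (subst_env u) k t.
Proof.
  revert k; induction t; intros k; simpl.
  - destruct_nat_tests; simpl; try (f_equal; lia).
    + subst. rewrite Nat.sub_diag. reflexivity.
    + destruct (n - k) eqn:E; [lia|]. simpl. destruct_nat_tests; f_equal; lia.
  - f_equal; auto.
  - f_equal; auto.
Qed.

Lemma psubst_id t k s : (forall n, free (n + k) t -> s n = Var n) -> psubst s k t = t.
Proof.
  revert k s; induction t; intros k s H; simpl.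
  - destruct (Nat.ltb_spec n k); auto.
    rewrite H by (simpl; lia). simpl. destruct_nat_tests; f_equal; lia.
  - f_equal; [apply IHt1 | apply IHt2]; intros m Hm; apply H; simpl; auto.
  - f_equal. apply IHt. intros m Hm. apply H. simpl. rewrite <- Nat.add_succ_r. auto.
Qed.

Lemma exists_fresh t : exists N, forall n, N <= n -> ~ free n t.
Proof.
  induction t as [m | t1 [N1 H1] t2 [N2 H2] | t [N H]].
  - exists (S m). simpl; lia.
  - exists (N1 + N2). intros n Hn [H|H]; [apply (H1 n) | apply (H2 n)]; auto; lia.
  - exists N. intros n Hn Hf. apply (H (S n)); auto.
Qed.

(** * Reduction and conversion *)

Definition red := clos_refl_trans term beta.

Lemma beta_psubst t t' : beta t t' -> forall s k, beta (psubst s k t) (psubst s k t').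
Proof.
  induction 1; intros s k; simpl; try (constructor; auto; fail).
  rewrite psubst_subst0. constructor.
Qed.

Section Compatibility.
Variable g : term -> term.
Hypothesis beta_g : forall t t', beta t t' -> beta (g t) (g t').

Lemma red_compat t t' : red t t' -> red (g t) (g t').
Proof. induction 1; [apply rt_step | apply rt_refl | eapply rt_trans]; eauto. Qed.

Lemma beta_eq_compat t t' : beta_eq t t' -> beta_eq (g t) (g t').
Proof.
  induction 1; [apply rst_step | apply rst_refl | apply rst_sym | eapply rst_trans]; eauto.
Qed.
End Compatibility.

Lemma red_appl t t' u : red t t' -> red (App t u) (App t' u).
Proof. apply (red_compat (fun t => App t u)); constructor; auto. Qed.
Lemma red_appr t u u' : red u u' -> red (App t u) (App t u').
Proof. apply (red_compat (App t)); constructor; auto. Qed.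
Lemma red_lam t t' : red t t' -> red (Lam t) (Lam t').
Proof. apply (red_compat Lam); constructor; auto. Qed.

Lemma beta_eq_appl t t' u : beta_eq t t' -> beta_eq (App t u) (App t' u).
Proof. apply (beta_eq_compat (fun t => App t u)); constructor; auto. Qed.
Lemma beta_eq_appr t u u' : beta_eq u u' -> beta_eq (App t u) (App t u').
Proof. apply (beta_eq_compat (App t)); constructor; auto. Qed.
Lemma beta_eq_lam t t' : beta_eq t t' -> beta_eq (Lam t) (Lam t').
Proof. apply (beta_eq_compat Lam); constructor; auto. Qed.
Lemma beta_eq_psubst s k t t' : beta_eq t t' -> beta_eq (psubst s k t) (psubst s k t').
Proof. apply (beta_eq_compat (psubst s k)); intros; apply beta_psubst; auto. Qed.
Lemma beta_eq_lift m c t t' : beta_eq t t' -> beta_eq (lift m c t) (lift m c t').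
Proof. rewrite !lift_psubst. apply beta_eq_psubst. Qed.
Lemma beta_eq_subst k u t t' : beta_eq t t' -> beta_eq (subst k u t) (subst k u t').
Proof. rewrite !subst_psubst. apply beta_eq_psubst. Qed.

Lemma red_beta_eq t u : red t u -> beta_eq t u.
Proof. induction 1; [apply rst_step | apply rst_refl | eapply rst_trans]; eauto. Qed.

Lemma beta_eq_redex t u : beta_eq (App (Lam t) u) (subst 0 u t).
Proof. apply rst_step; constructor. Qed.

Lemma beta_app_var_inv m a t :
  beta (App (Var m) a) t -> exists a', t = App (Var m) a' /\ beta a a'.
Proof. intros H; inversion H; subst; eauto. match goal with Hv : beta (Var _) _ |- _ => inversion Hv end. Qed.

(** * Church-Rosser *)

Section Confluence.
Variables (T : Type) (R : relation T).

Lemma diamond_rt_confluent :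
  (forall t t1 t2, R t t1 -> R t t2 -> exists t3, R t1 t3 /\ R t2 t3) ->
  forall t t1 t2, clos_refl_trans T R t t1 -> clos_refl_trans T R t t2 ->
    exists t3, clos_refl_trans T R t1 t3 /\ clos_refl_trans T R t2 t3.
Proof.
  intros diamond.
  assert (strip : forall t t2, clos_refl_trans T R t t2 -> forall t1, R t t1 ->
            exists t3, clos_refl_trans T R t1 t3 /\ R t2 t3).
  { intros t t2 H. apply clos_rt_rt1n in H.
    induction H as [t | t t' t2 Ht _ IH]; intros t1 H1.
    - exists t1; split; [apply rt_refl | auto].
    - destruct (diamond _ _ _ H1 Ht) as [a [Ha1 Ha2]].
      destruct (IH _ Ha2) as [b [Hb1 Hb2]].
      exists b; split; auto. eapply rt_trans; [apply rt_step |]; eauto. }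
  intros t t1 t2 H. revert t2. apply clos_rt_rt1n in H.
  induction H as [t | t t' t1 Ht _ IH]; intros t2 H2.
  - exists t2; split; [auto | apply rt_refl].
  - destruct (strip _ _ H2 _ Ht) as [a [Ha1 Ha2]].
    destruct (IH _ Ha1) as [b [Hb1 Hb2]].
    exists b; split; auto. eapply rt_trans; [apply rt_step |]; eauto.
Qed.

Lemma confluent_rst_joinable :
  (forall t t1 t2, clos_refl_trans T R t t1 -> clos_refl_trans T R t t2 ->
     exists t3, clos_refl_trans T R t1 t3 /\ clos_refl_trans T R t2 t3) ->
  forall t u, clos_refl_sym_trans T R t u ->
    exists w, clos_refl_trans T R t w /\ clos_refl_trans T R u w.
Proof.
  intros confl t u H. induction H as [t u H | t | t u _ [w [? ?]] | t u v _ [w1 [? ?]] _ [w2 [? ?]]].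
  - exists u; split; [apply rt_step | apply rt_refl]; auto.
  - exists t; split; apply rt_refl.
  - eauto.
  - destruct (confl u w1 w2) as [w [? ?]]; auto.
    exists w; split; eapply rt_trans; eauto.
Qed.
End Confluence.

Inductive par : term -> term -> Prop :=
| par_var n : par (Var n) (Var n)
| par_app t t' u u' : par t t' -> par u u' -> par (App t u) (App t' u')
| par_lam t t' : par t t' -> par (Lam t) (Lam t')
| par_beta t t' u u' : par t t' -> par u u' -> par (App (Lam t) u) (subst 0 u' t').

Lemma par_refl t : par t t.
Proof. induction t; constructor; auto. Qed.

Lemma par_lift t t' : par t t' -> forall m c, par (lift m c t) (lift m c t').
Proof.
  induction 1; intros m c; simpl; try (constructor; auto; fail).
  - apply par_refl.
  - rewrite !lift_psubst, psubst_subst0, <- !lift_psubst. constructor; auto.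
Qed.

Lemma par_psubst t t' : par t t' -> forall s s' k, (forall n, par (s n) (s' n)) ->
  par (psubst s k t) (psubst s' k t').
Proof.
  induction 1; intros s s' k Hs; simpl.
  - destruct (Nat.ltb n k); [constructor | apply par_lift; auto].
  - constructor; auto.
  - constructor; auto.
  - rewrite psubst_subst0. constructor; auto.
Qed.

Lemma par_subst t t' u u' k : par t t' -> par u u' -> par (subst k u t) (subst k u' t').
Proof.
  intros H1 H2. rewrite !subst_psubst. apply par_psubst; auto.
  intros [|n]; simpl; auto. constructor.
Qed.

Lemma par_lam_inv t u : par (Lam t) u -> exists t', u = Lam t' /\ par t t'.
Proof. intros H; inversion H; subst; eauto. Qed.

Lemma par_diamond t t1 t2 : par t t1 -> par t t2 -> exists t3, par t1 t3 /\ par t2 t3.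
Proof.
  intros H1; revert t2; induction H1 as [n | t t' u u' Ht IHt Hu IHu | t t' Ht IHt
                                          | t t' u u' Ht IHt Hu IHu]; intros t2 H2.
  - inversion H2; subst. exists (Var n); split; constructor.
  - inversion H2 as [| ? t2' ? u2' Ht2 Hu2 | | t0 t0' ? u2' Ht0 Hu2]; subst.
    + destruct (IHt _ Ht2) as [a [? ?]]. destruct (IHu _ Hu2) as [b [? ?]].
      exists (App a b); split; constructor; auto.
    + destruct (par_lam_inv _ _ Ht) as [t1' [-> Ht1']].
      destruct (IHt (Lam t0')) as [a [Ha1 Ha2]]; [constructor; auto |].
      destruct (par_lam_inv _ _ Ha2) as [a' [-> Ha']].
      inversion Ha1; subst.
      destruct (IHu _ Hu2) as [b [? ?]].
      exists (subst 0 b a'); split; [constructor | apply par_subst]; auto.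
  - inversion H2 as [| | ? t2' Ht2 |]; subst. destruct (IHt _ Ht2) as [a [? ?]].
    exists (Lam a); split; constructor; auto.
  - inversion H2 as [| ? t2' ? u2' Ht2 Hu2 | | ? t2' ? u2' Ht2 Hu2]; subst.
    + destruct (par_lam_inv _ _ Ht2) as [b2 [-> Hb2]].
      destruct (IHt _ Hb2) as [a [? ?]]. destruct (IHu _ Hu2) as [b [? ?]].
      exists (subst 0 b a); split; [apply par_subst | constructor]; auto.
    + destruct (IHt _ Ht2) as [a [? ?]]. destruct (IHu _ Hu2) as [b [? ?]].
      exists (subst 0 b a); split; apply par_subst; auto.
Qed.

Lemma par_red t t' : par t t' -> red t t'.
Proof.
  induction 1.
  - apply rt_refl.
  - eapply rt_trans; [apply red_appl | apply red_appr]; eauto.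
  - apply red_lam; auto.
  - eapply rt_trans; [apply red_appl, red_lam; eauto |].
    eapply rt_trans; [apply red_appr; eauto |]. apply rt_step; constructor.
Qed.

Lemma beta_par t t' : beta t t' -> par t t'.
Proof. induction 1; constructor; auto using par_refl. Qed.

Lemma red_confluent t t1 t2 : red t t1 -> red t t2 -> exists t3, red t1 t3 /\ red t2 t3.
Proof.
  assert (red_par : forall t t', red t t' <-> clos_refl_trans term par t t').
  { unfold red; split; induction 1; try (eapply rt_trans; eassumption).
    all: auto using rt_step, rt_refl, beta_par.
    apply par_red; auto. }
  intros H1 H2. apply red_par in H1, H2.
  destruct (diamond_rt_confluent _ _ par_diamond _ _ _ H1 H2) as [a [? ?]].
  exists a; split; apply red_par; auto.
Qed.

Lemma church_rosser t u : beta_eq t u -> exists w, red t w /\ red u w.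
Proof. apply confluent_rst_joinable, red_confluent. Qed.

Lemma red_var n t : red (Var n) t -> t = Var n.
Proof.
  intros H. apply clos_rt_rt1n in H. remember (Var n) as v eqn:E.
  induction H; auto. subst. inversion H.
Qed.

Lemma beta_eq_var n m : beta_eq (Var n) (Var m) -> n = m.
Proof.
  intros H. destruct (church_rosser _ _ H) as [w [H1 H2]].
  apply red_var in H1; apply red_var in H2. congruence.
Qed.

Lemma fpc_spec Y : fpc Y -> forall H, beta_eq (App Y H) (App H (App Y H)).
Proof.
  intros [x [Hx Heq]] H.
  set (s := fun n => if Nat.eqb n x then H else Var n).
  apply (beta_eq_psubst s 0) in Heq. simpl in Heq.
  rewrite psubst_id in Heq.
  2:{ intros n Hn. unfold s. destruct (Nat.eqb_spec n x); auto.
      subst. rewrite Nat.add_0_r in Hn. contradiction. }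
  unfold s in Heq. rewrite Nat.sub_0_r, Nat.eqb_refl, lift_0 in Heq. exact Heq.
Qed.

(** * Twinned occurrences of a variable *)

Section Twinned.
Variable f : nat.

(* Under [d] binders the free variable [f] has index [d + f]; this convention
   is used by all the relations below. *)
Inductive twinned : nat -> term -> Prop :=
| twinned_var d n : n <> d + f -> twinned d (Var n)
| twinned_lam d t : twinned (S d) t -> twinned d (Lam t)
| twinned_app d t u : twinned d t -> twinned d u -> twinned d (App t u)
| twinned_f d m a1 a2 : m = d + f -> beta_eq a1 a2 -> twinned d a1 -> twinned d a2 ->
    twinned d (App (App (Var m) a1) a2).

Lemma twinned_not_free t d : ~ free (d + f) t -> twinned d t.
Proof.
  revert d; induction t; intros d H; simpl in H.
  - constructor; auto.
  - constructor; [apply IHt1 | apply IHt2]; tauto.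
  - constructor. apply IHt. auto.
Qed.

Lemma twinned_lift d t : twinned d t -> forall c m, c <= d -> twinned (m + d) (lift m c t).
Proof.
  induction 1; intros c m' Hc; simpl.
  - destruct_nat_tests; constructor; lia.
  - constructor. rewrite <- Nat.add_succ_r. apply IHtwinned. lia.
  - constructor; auto.
  - subst m. destruct_nat_tests; [lia |].
    apply twinned_f; auto; [lia |]. apply beta_eq_lift; auto.
Qed.

Lemma twinned_subst d0 b : twinned d0 b -> forall k d u, d0 = k + S d -> twinned d u ->
  twinned (k + d) (subst k u b).
Proof.
  induction 1; intros k d' w Hd Hu; subst; simpl.
  - destruct_nat_tests.
    + constructor; lia.
    + apply (twinned_lift d' w Hu 0 k). lia.
    + constructor; lia.
  - constructor. apply (IHtwinned (S k) d' w); auto.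
  - constructor; eauto.
  - destruct_nat_tests; try lia.
    apply twinned_f; eauto; [lia |]. apply beta_eq_subst; auto.
Qed.

Fixpoint size (t : term) : nat :=
  match t with Var _ => 1 | App a b => S (size a + size b) | Lam a => S (size a) end.

(* Induction on the size of the redex: when [f a1 a2] reduces inside [a1],
   the step is not a subderivation of the step on [f a1]. *)
Lemma twinned_beta d t t' : twinned d t -> beta t t' -> twinned d t'.
Proof.
  enough (H : forall N t, size t < N -> forall d t', twinned d t -> beta t t' -> twinned d t')
    by eauto.
  clear d t t'. induction N as [|N IH]; intros t Hs d t' Ht Hb; [lia |].
  destruct t as [n | t1 t2 | t1]; simpl in Hs.
  - inversion Hb.
  - inversion Hb as [t u | ? t1' ? Hb1 | ? ? t2' Hb2 |]; subst.
    + inversion Ht as [| | ? ? ? Hlam Hu |]; subst.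
      inversion Hlam as [| ? ? Ht0 | |]; subst.
      exact (twinned_subst (S d) t Ht0 0 d _ eq_refl Hu).
    + inversion Ht as [| | ? ? ? Ht1 Ht2 | ? ? a1 a2 -> Ha12 Ha1 Ha2]; subst.
      * constructor; auto. apply (IH t1); auto; lia.
      * destruct (beta_app_var_inv _ _ _ Hb1) as [a' [-> Ha]].
        apply twinned_f; auto.
        -- apply (rst_trans _ _ _ a1); [apply rst_sym, rst_step |]; auto.
        -- apply (IH a1); auto. simpl in Hs; lia.
    + inversion Ht as [| | ? ? ? Ht1 Ht2 | ? ? a1 a2 -> Ha12 Ha1 Ha2]; subst.
      * constructor; auto. apply (IH t2); auto; lia.
      * apply twinned_f; auto.
        -- apply (rst_trans _ _ _ t2); [| apply rst_step]; auto.
        -- apply (IH t2); auto; lia.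
  - inversion Hb as [| | | ? t1' Hb1]; subst.
    inversion Ht as [| ? ? Ht1 | |]; subst.
    constructor. apply (IH t1); auto; lia.
Qed.

Lemma twinned_red d t t' : red t t' -> twinned d t -> twinned d t'.
Proof. induction 1; eauto using twinned_beta. Qed.

End Twinned.

(** * Expanding a fresh variable *)

Section Expansion.
Variables (x f : nat) (A : term).

(* [expands d Q P]: [P] is [Q] with [x] replaced by [λz. f A z], where in
   applications [x u] the resulting redex may already have been contracted to
   [f A u]; [A] is taken up to conversion. *)
Inductive expands : nat -> term -> term -> Prop :=
| expands_var d n : n <> d + x -> n <> d + f -> expands d (Var n) (Var n)
| expands_lam d t t' : expands (S d) t t' -> expands d (Lam t) (Lam t')
| expands_app d t1 t1' t2 t2' : expands d t1 t1' -> expands d t2 t2' ->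
    expands d (App t1 t2) (App t1' t2')
| expands_x d n m b : n = d + x -> m = S (d + f) -> beta_eq b (lift (S d) 0 A) ->
    expands d (Var n) (Lam (App (App (Var m) b) (Var 0)))
| expands_x_app d n m a u u' : n = d + x -> m = d + f -> beta_eq a (lift d 0 A) ->
    expands d u u' -> expands d (App (Var n) u) (App (App (Var m) a) u').

Lemma expands_refl t d : ~ free (d + x) t -> ~ free (d + f) t -> expands d t t.
Proof.
  revert d; induction t; intros d H1 H2; simpl in *.
  - constructor; auto.
  - constructor; [apply IHt1 | apply IHt2]; tauto.
  - constructor. apply IHt; auto.
Qed.

Lemma expands_lift d t t' : expands d t t' -> forall c m, c <= d ->
  expands (m + d) (lift m c t) (lift m c t').
Proof.
  induction 1; intros c m' Hc; simpl.
  - destruct_nat_tests; constructor; lia.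
  - constructor. rewrite <- Nat.add_succ_r. apply IHexpands. lia.
  - constructor; auto.
  - subst. destruct_nat_tests; try lia. simpl. apply expands_x; try lia.
    eapply rst_trans; [apply beta_eq_lift; eauto |].
    rewrite lift_lift by lia. rewrite Nat.add_succ_r. apply rst_refl.
  - subst. destruct_nat_tests; try lia. apply expands_x_app; try lia; auto.
    eapply rst_trans; [apply beta_eq_lift; eauto |].
    rewrite lift_lift by lia. apply rst_refl.
Qed.

Lemma expands_subst d0 t b : expands d0 t b -> forall k d q u, d0 = k + S d ->
  expands d q u -> expands (k + d) (subst k q t) (subst k u b).
Proof.
  induction 1; intros k d' q w Hd Hq; subst; simpl.
  - destruct_nat_tests; try (constructor; lia).
    apply (expands_lift d' q w Hq 0 k). lia.
  - constructor. apply (IHexpands (S k) d' q w); auto.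
  - constructor; eauto.
  - destruct_nat_tests; try lia. simpl. apply expands_x; try lia.
    eapply rst_trans; [apply beta_eq_subst; eauto |].
    replace (S (k + S d')) with (S (S (k + d'))) by lia.
    rewrite subst_lift by lia. apply rst_refl.
  - destruct_nat_tests; try lia. apply expands_x_app; try lia; eauto.
    eapply rst_trans; [apply beta_eq_subst; eauto |].
    replace (k + S d') with (S (k + d')) by lia.
    rewrite subst_lift by lia. apply rst_refl.
Qed.

Lemma expands_beta P P' : beta P P' -> forall d Q, expands d Q P ->
  exists Q', expands d Q' P'.
Proof.
  induction 1 as [t u | t t' u Hb IH | t u u' Hb IH | t t' Hb IH]; intros d Q HS.
  - inversion HS as [| | ? q1 ? q2 ? Hq1 Hq2 | |]; subst.
    inversion Hq1 as [| ? q ? Hq | | |]; subst.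
    + exists (subst 0 q2 q). exact (expands_subst (S d) q t Hq 0 d q2 u eq_refl Hq2).
    + simpl. eexists. rewrite lift_0. apply expands_x_app; eauto.
      eapply rst_trans; [apply beta_eq_subst; eauto |].
      rewrite subst_lift by lia. apply rst_refl.
  - inversion HS; subst.
    + match goal with H : expands _ _ t |- _ => destruct (IH _ _ H) as [Q1 HQ1] end.
      eexists. apply expands_app; eauto.
    + destruct (beta_app_var_inv _ _ _ Hb) as [a' [-> Ha]].
      eexists. apply expands_x_app; eauto.
      eapply rst_trans; [apply rst_sym, rst_step |]; eauto.
  - inversion HS; subst;
      match goal with H : expands _ _ u |- _ => destruct (IH _ _ H) as [Q1 HQ1] end.
    + eexists. apply expands_app; eauto.
    + eexists. apply expands_x_app; eauto.
  - inversion HS; subst.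
    + match goal with H : expands _ _ t |- _ => destruct (IH _ _ H) as [Q1 HQ1] end.
      eexists. apply expands_lam; eauto.
    + eexists. inversion Hb; subst.
      * match goal with H : beta (App (Var _) _) _ |- _ =>
          destruct (beta_app_var_inv _ _ _ H) as [a' [-> Ha]] end.
        apply expands_x; eauto. eapply rst_trans; [apply rst_sym, rst_step |]; eauto.
      * match goal with H : beta (Var _) _ |- _ => inversion H end.
Qed.

Lemma expands_red d Q P P' : red P P' -> expands d Q P -> exists Q', expands d Q' P'.
Proof.
  intros H. revert Q. induction H as [P P' H | P | P P1 P' _ IH1 _ IH2]; intros Q HS.
  - eapply expands_beta; eauto.
  - eauto.
  - destruct (IH1 _ HS) as [Q1 H1]. eauto.
Qed.

Hypothesis A_not_conv_free : forall d v, ~ free (d + f) v -> ~ beta_eq v (lift d 0 A).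

(* Each [f] of [P] comes with first argument [A]; twinning forces the second one
   to be convertible to [A] as well, which is excluded for [f]-free terms. *)
Lemma expands_twinned_not_free d Q P : expands d Q P -> twinned f d P -> ~ free (d + f) P.
Proof.
  induction 1 as [d n | d t t' _ IH | d t1 t1' t2 t2' H1 IH1 H2 IH2
                  | d n m b -> -> Hb | d n m a u u' -> -> Ha Hu IH]; intros HT; simpl.
  - lia.
  - inversion HT; subst. apply IH; auto.
  - inversion HT; subst.
    + intros [?|?]; [apply IH1 | apply IH2]; auto.
    + exfalso. inversion H1; subst.
      match goal with H : expands _ _ (Var _) |- _ => inversion H end. lia.
  - exfalso. inversion HT; subst.
    match goal with H : twinned _ _ (App _ (Var 0)) |- _ => inversion H; subst end.
    + match goal with H : twinned _ _ (App (Var _) _) |- _ => inversion H; subst end.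
      match goal with H : twinned _ _ (Var _) |- _ => inversion H end. lia.
    + apply (A_not_conv_free (S d) (Var 0)); simpl; [lia |].
      eapply rst_trans; [apply rst_sym |]; eauto.
  - exfalso. inversion HT; subst.
    + match goal with H : twinned _ _ (App (Var _) _) |- _ => inversion H; subst end.
      match goal with H : twinned _ _ (Var _) |- _ => inversion H end. lia.
    + apply (A_not_conv_free d u'); [apply IH; auto |].
      eapply rst_trans; [apply rst_sym |]; eauto.
Qed.

End Expansion.

(** * Fixed points of the diagonal *)

Section FixDiag.
Variables (Y : term) (f : nat).
Hypothesis Y_fpc : forall H, beta_eq (App Y H) (App H (App Y H)).
Hypothesis f_not_free : ~ free f Y.

Definition kill_f (c n : nat) : term :=
  if Nat.eqb n f then Lam (Lam (Var (2 + c))) else Var n.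

Lemma psubst_kill_f_Y c : psubst (kill_f c) 0 Y = Y.
Proof.
  apply psubst_id. intros n Hn. unfold kill_f. destruct (Nat.eqb_spec n f); auto.
  subst. rewrite Nat.add_0_r in Hn. contradiction.
Qed.

(* With [f := λa b. c], [Y (λz. f z z)] is [Y (λz. c)], a fixed point of a
   constant function. *)
Lemma fix_diag_kill_f c : beta_eq (psubst (kill_f c) 0 (App Y (diag_fun f))) (Var c).
Proof.
  simpl. rewrite psubst_kill_f_Y. unfold diag_fun, kill_f. simpl.
  rewrite Nat.sub_0_r, Nat.eqb_refl. simpl.
  eapply rst_trans.
  { apply beta_eq_appr, beta_eq_lam. eapply rst_trans.
    - apply beta_eq_appl, beta_eq_redex.
    - apply beta_eq_redex. }
  simpl. rewrite Nat.add_1_r.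
  eapply rst_trans; [apply Y_fpc |]. apply beta_eq_redex.
Qed.

Lemma fix_diag_not_conv_free d v :
  ~ free (d + f) v -> ~ beta_eq v (lift d 0 (App Y (diag_fun f))).
Proof.
  intros Hv He.
  assert (Hc : forall c, beta_eq v (Var (c + d))).
  { intros c. apply (beta_eq_psubst (kill_f c) d) in He.
    rewrite psubst_id in He.
    2:{ intros n Hn. unfold kill_f. destruct (Nat.eqb_spec n f); auto. subst.
        rewrite Nat.add_comm in Hn. contradiction. }
    pose proof (psubst_lift (App Y (diag_fun f)) (kill_f c) d 0 0 (le_n 0)) as E.
    rewrite Nat.add_0_r in E. rewrite E in He.
    eapply rst_trans; [exact He |]. exact (beta_eq_lift d 0 _ _ (fix_diag_kill_f c)). }
  pose proof (beta_eq_var _ _ (rst_trans _ _ _ _ _ (rst_sym _ _ _ _ (Hc 0)) (Hc 1))).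
  lia.
Qed.

Lemma fix_diag_twinned : twinned f 0 (App Y (diag_fun f)).
Proof.
  constructor.
  - apply twinned_not_free; simpl; auto.
  - constructor. apply twinned_f; [lia | apply rst_refl | constructor; lia | constructor; lia].
Qed.

Definition fix_unrolled : term :=
  App Y (Lam (App (App (Var (S f)) (lift 1 0 (App Y (diag_fun f)))) (Var 0))).

Lemma fix_nested_unfold :
  beta_eq (App Y (nested_fix Y f))
    (App Y (Lam (App (App (Var (S f)) (lift 1 0 (App Y (nested_fix Y f)))) (Var 0)))).
Proof.
  eapply rst_trans; [apply Y_fpc |]. unfold nested_fix at 1.
  eapply rst_trans; [apply beta_eq_redex |]. cbn [subst Nat.ltb Nat.leb Nat.eqb pred].
  rewrite (subst_lift Y _ 0 0 0), lift_0 by lia. apply rst_refl.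
Qed.

Lemma fix_diag_conv_unrolled :
  beta_eq (App Y (diag_fun f)) (App Y (nested_fix Y f)) ->
  beta_eq (App Y (diag_fun f)) fix_unrolled.
Proof.
  intros Heq. eapply rst_trans; [exact Heq |]. eapply rst_trans; [exact fix_nested_unfold |].
  apply beta_eq_appr, beta_eq_lam, beta_eq_appl, beta_eq_appr, beta_eq_lift, rst_sym, Heq.
Qed.

Lemma fix_unrolled_expands :
  exists x, expands x f (App Y (diag_fun f)) 0 (App Y (Var x)) fix_unrolled.
Proof.
  destruct (exists_fresh Y) as [N HN]. exists (N + S f).
  constructor.
  - apply expands_refl; simpl; [apply HN; lia | auto].
  - apply expands_x; auto. apply rst_refl.
Qed.

Lemma fix_diag_not_conv_nested :
  ~ beta_eq (App Y (diag_fun f)) (App Y (nested_fix Y f)).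
Proof.
  intros Heq.
  destruct (church_rosser _ _ (fix_diag_conv_unrolled Heq)) as [P [HAP HCP]].
  destruct fix_unrolled_expands as [x Hx].
  destruct (expands_red _ _ _ _ _ _ _ HCP Hx) as [Q HQ].
  assert (HfP : ~ free (0 + f) P).
  { apply (expands_twinned_not_free x f _ fix_diag_not_conv_free 0 Q); auto.
    exact (twinned_red f 0 _ _ HAP fix_diag_twinned). }
  apply (fix_diag_not_conv_free 0 P HfP).
  rewrite lift_0. apply rst_sym, red_beta_eq, HAP.
Qed.

End FixDiag.

Theorem proposition5p6 :
  ~ exists (Y : term) (f : nat),
      fpc Y /\ ~ free f Y /\
      beta_eq (App Y (diag_fun f)) (App Y (nested_fix Y f)).
Proof.
  intros [Y [f [HY [Hf Heq]]]].
  exact (fix_diag_not_conv_nested Y f (fpc_spec Y HY) Hf Heq).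
Qed.
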